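(* Let $G\in\mathrm{PLT}$ and let $A,B$ be finitely generated subgroups of $G'$. Then there exists $g\in G$ such that $A^g$ and $B$ centralize each other (every element of $A^g$ commutes with every element of $B$).
   Context: $\mathrm{PLT}$ is the class of groups that act faithfully by piecewise linear orientation preserving self-homeomorphisms of $[0,1]$ (each differentiable except at finitely many points) with no common fixed point in $(0,1)$. $G'$ is the commutator subgroup, and $A^g=gAg^{-1}$. *)

From Stdlib Require Import Reals List.
Open Scope R_scope.

(* Homeomorphisms of [0,1] are represented as functions R -> R that are the
   identity outside [0,1]; group law = composition. *)

Definition PL_homeo (f : R -> R) : Prop :=
  (forall t, (t < 0 \/ 1 < t) -> f t = t) /\
  f 0 = 0 /\ f 1 = 1 /\
  (forall s t, 0 <= s -> s < t -> t <= 1 -> f s < f t) /\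
  exists (n : nat) (x : nat -> R),
    x 0%nat = 0 /\ x n = 1 /\
    (forall i, (i < n)%nat -> x i < x (S i)) /\
    (forall i, (i < n)%nat -> exists a b : R,
        forall t, x i <= t -> t <= x (S i) -> f t = a * t + b).

Definition idR : R -> R := fun x => x.

Definition is_inv (f g : R -> R) : Prop :=
  (forall x, f (g x) = x) /\ (forall x, g (f x) = x).

Definition PL_group (G : (R -> R) -> Prop) : Prop :=
  (forall f, G f -> PL_homeo f) /\
  G idR /\
  (forall f g, G f -> G g -> G (fun x => f (g x))) /\
  (forall f, G f -> exists g, G g /\ is_inv f g).

Definition PLT (G : (R -> R) -> Prop) : Prop :=
  PL_group G /\
  forall t, 0 < t < 1 -> exists g, G g /\ g t <> t.

Definition commR (g h gi hi : R -> R) : R -> R :=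
  fun x => g (h (gi (hi x))).

(* The commutator subgroup G' : products of commutators of elements of G
   (the inverse of a commutator is a commutator). *)
Inductive derived (G : (R -> R) -> Prop) : (R -> R) -> Prop :=
| derived_id : derived G idR
| derived_step : forall f g h gi hi,
    derived G f -> G g -> G h -> is_inv g gi -> is_inv h hi ->
    derived G (fun x => commR g h gi hi (f x)).

Inductive gen (s : list (R -> R)) : (R -> R) -> Prop :=
| gen_id : gen s idR
| gen_mul : forall f y, gen s f -> In y s -> gen s (fun x => y (f x))
| gen_inv : forall f y yi, gen s f -> In y s -> is_inv y yi ->
    gen s (fun x => yi (f x)).

(* Elements of G' are the identity near 0 and near 1, since the slope of a PL
   homeomorphism at an endpoint is multiplicative and hence trivial on
   commutators.  So A and B, being finitely generated, move only points of
   some interval (e, 1 - e).  Because G has no common fixed point in (0,1),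
   the infimum of the G-orbit of 1 - e is 0 (an infimum in (0,1) would be
   fixed by all of G), so some g pushes the interval of A below that of B.
   Then A^g and B have disjoint invariant supports, hence commute. *)

From Stdlib Require Import Reals List Lra Classical FunctionalExtensionality.
Open Scope R_scope.

Definition maps01 (f : R -> R) : Prop :=
  forall t, 0 <= t <= 1 -> 0 <= f t <= 1.

Definition germ (p a : R) (f : R -> R) : Prop :=
  exists e, 0 < e /\
    forall t, 0 <= t <= 1 -> p - e <= t <= p + e -> f t = p + a * (t - p).

Definition moves_within (f : R -> R) (U : R -> Prop) : Prop :=
  forall x, f x <> x -> U x /\ U (f x).

Lemma PL_homeo_lt f s t :
  PL_homeo f -> 0 <= s -> s < t -> t <= 1 -> f s < f t.
Proof. intros [_ [_ [_ [H _]]]]; apply H. Qed.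

Lemma PL_homeo_maps01 f : PL_homeo f -> maps01 f.
Proof.
  intros Hf t Ht.
  pose proof (PL_homeo_lt f 0 t Hf) as L0. pose proof (PL_homeo_lt f t 1 Hf) as L1.
  destruct Hf as [_ [H0 [H1 _]]].
  destruct (Req_dec t 0) as [->|Ht0]; [rewrite H0; lra|].
  destruct (Req_dec t 1) as [->|Ht1]; [rewrite H1; lra|].
  rewrite H0, H1 in *. split; left; [apply L0 | apply L1]; lra.
Qed.

Lemma PL_homeo_germ f p : PL_homeo f -> p = 0 \/ p = 1 -> exists a, germ p a f.
Proof.
  intros [_ [H0 [H1 [_ [n [x [Hx0 [Hxn [Hinc Hlin]]]]]]]]] Hp.
  destruct n as [|n]; [rewrite Hx0 in Hxn; lra|].
  destruct Hp as [->| ->].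
  - destruct (Hlin 0%nat (Nat.lt_0_succ n)) as [a [b Hab]].
    pose proof (Hinc 0%nat (Nat.lt_0_succ n)).
    exists a, (x 1%nat). split; [lra|]. intros t Ht Hte.
    assert (f 0 = a * 0 + b) by (apply Hab; lra).
    rewrite Hab by lra. lra.
  - destruct (Hlin n (Nat.lt_succ_diag_r n)) as [a [b Hab]].
    pose proof (Hinc n (Nat.lt_succ_diag_r n)).
    exists a, (1 - x n). split; [lra|]. intros t Ht Hte.
    assert (f 1 = a * 1 + b) by (apply Hab; lra).
    rewrite Hab by lra. nra.
Qed.

Lemma PL_group_inv_mem G g gi : PL_group G -> G g -> is_inv g gi -> G gi.
Proof.
  intros [_ [_ [_ Hinv]]] Hg [E1 _].
  destruct (Hinv g Hg) as [g' [Hg' [_ F2]]].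
  replace gi with g'; [exact Hg'|].
  apply functional_extensionality; intros x.
  rewrite <- (F2 (gi x)), E1. reflexivity.
Qed.

Lemma derived_mem G d : PL_group G -> derived G d -> G d.
Proof.
  intros HG Hd. pose proof HG as [_ [Hid [Hcomp _]]].
  induction Hd as [|f g h gi hi _ IH Hg Hh Hgi Hhi]; [exact Hid|].
  unfold commR.
  pose proof (PL_group_inv_mem G g gi HG Hg Hgi).
  pose proof (PL_group_inv_mem G h hi HG Hh Hhi).
  apply (Hcomp g (fun x => h (gi (hi (f x))))); auto.
Qed.

Lemma germ_comp p a b f g :
  maps01 f -> germ p a f -> germ p b g -> germ p (b * a) (fun x => g (f x)).
Proof.
  intros Hm [e1 [He1 H1]] [e2 [He2 H2]].
  pose proof (Rabs_pos a).
  set (m := e2 / (Rabs a + 1)).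
  assert (Hm0 : 0 < m) by (apply Rdiv_lt_0_compat; lra).
  assert (Hme : (Rabs a + 1) * m = e2) by (unfold m; field; lra).
  exists (Rmin e1 m). split; [apply Rmin_pos; lra|].
  intros t Ht Hte. pose proof (Rmin_l e1 m). pose proof (Rmin_r e1 m).
  pose proof (Hm t Ht) as Hft.
  rewrite H1 in Hft |- * by lra.
  rewrite H2; [ring | exact Hft |].
  (* |a (t - p)| <= |a| m <= e2 *)
  assert (-m <= t - p <= m) by lra.
  destruct (Rcase_abs a) as [Ha|Ha];
    [rewrite Rabs_left in Hme by lra | rewrite Rabs_right in Hme by lra];
    split; nra.
Qed.

Lemma germ_idR p a : p = 0 \/ p = 1 -> germ p a idR -> a = 1.
Proof.
  intros Hp [e [He H]]. unfold idR in H.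
  pose proof (Rmin_l e (1/2)). pose proof (Rmin_r e (1/2)).
  assert (0 < Rmin e (1/2)) by (apply Rmin_pos; lra).
  set (d := Rmin e (1/2)) in *.
  assert (Hd : (a - 1) * d = 0).
  { destruct Hp as [->| ->].
    - specialize (H d ltac:(lra) ltac:(lra)). lra.
    - specialize (H (1 - d) ltac:(lra) ltac:(lra)). lra. }
  apply Rmult_integral in Hd. lra.
Qed.

Lemma germ_inv_slope p g gi a b :
  p = 0 \/ p = 1 -> maps01 gi -> is_inv g gi ->
  germ p a g -> germ p b gi -> a * b = 1.
Proof.
  intros Hp Hm [E1 _] Ha Hb. apply (germ_idR p); auto.
  replace idR with (fun x => g (gi x)) by (apply functional_extensionality; auto).
  apply germ_comp; auto.
Qed.

Lemma derived_germ G p d : PL_group G -> p = 0 \/ p = 1 -> derived G d -> germ p 1 d.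
Proof.
  intros HG Hp Hd. pose proof HG as [HPL [_ [Hcomp _]]].
  assert (HM : forall k, G k -> maps01 k)
    by (intros k Hk; apply PL_homeo_maps01, HPL, Hk).
  assert (HS : forall k, G k -> exists a, germ p a k)
    by (intros k Hk; apply PL_homeo_germ; auto).
  induction Hd as [|f g h gi hi Hf IH Hg Hh Hgi Hhi].
  - exists 1. split; [lra|]. intros. unfold idR. ring.
  - pose proof (PL_group_inv_mem G g gi HG Hg Hgi) as Hgi'.
    pose proof (PL_group_inv_mem G h hi HG Hh Hhi) as Hhi'.
    pose proof (derived_mem G f HG Hf) as Hf'.
    destruct (HS g Hg) as [ag Ag]. destruct (HS gi Hgi') as [agi Agi].
    destruct (HS h Hh) as [ah Ah]. destruct (HS hi Hhi') as [ahi Ahi].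
    assert (Sg : ag * agi = 1) by (apply (germ_inv_slope p g gi); auto).
    assert (Sh : ah * ahi = 1) by (apply (germ_inv_slope p h hi); auto).
    assert (E : ag * (ah * (agi * (ahi * 1))) = 1)
      by (transitivity ((ag * agi) * (ah * ahi)); [ring | rewrite Sg, Sh; ring]).
    rewrite <- E. unfold commR.
    apply (germ_comp p _ _ (fun x => h (gi (hi (f x)))) g); auto.
    apply (germ_comp p _ _ (fun x => gi (hi (f x))) h); auto.
    apply (germ_comp p _ _ (fun x => hi (f x)) gi); auto.
    apply (germ_comp p _ _ f hi); auto.
Qed.

Lemma moves_within_weaken f (U V : R -> Prop) :
  moves_within f U -> (forall x, U x -> V x) -> moves_within f V.
Proof. intros H HUV x Hx. destruct (H x Hx). auto. Qed.

Lemma moves_within_comp f h U :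
  moves_within f U -> moves_within h U -> moves_within (fun x => h (f x)) U.
Proof.
  intros Hf Hh x Hx.
  destruct (classic (f x = x)) as [E|E].
  - rewrite E in *. apply Hh, Hx.
  - split; [apply Hf, E|].
    destruct (classic (h (f x) = f x)) as [E'|E'].
    + rewrite E'. apply Hf, E.
    + apply Hh, E'.
Qed.

Lemma moves_within_inv y yi U :
  is_inv y yi -> moves_within y U -> moves_within yi U.
Proof.
  intros [E1 _] Hy x Hx.
  assert (Hm : y (yi x) <> yi x) by (rewrite E1; auto).
  rewrite <- (E1 x) at 1. apply and_comm, Hy, Hm.
Qed.

Lemma gen_moves_within s f U :
  (forall y, In y s -> moves_within y U) -> gen s f -> moves_within f U.
Proof.
  intros Hs Hf. induction Hf as [|f y _ IH Hy|f y yi _ IH Hy Hyi].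
  - intros x Hx. exfalso. apply Hx. reflexivity.
  - apply moves_within_comp; auto.
  - apply moves_within_comp; auto. apply (moves_within_inv y); auto.
Qed.

Lemma moves_within_conj g gi a U :
  is_inv g gi -> moves_within a U ->
  moves_within (fun x => g (a (gi x))) (fun y => U (gi y)).
Proof.
  intros [E1 E2] Ha x Hx.
  assert (Hm : a (gi x) <> gi x) by (intro E; apply Hx; rewrite E; auto).
  rewrite E2. apply Ha, Hm.
Qed.

Lemma moves_within_commute f h U V :
  moves_within f U -> moves_within h V -> (forall x, U x -> V x -> False) ->
  forall x, f (h x) = h (f x).
Proof.
  intros Hf Hh Hdisj x.
  destruct (classic (h x = x)) as [Ex|Ex].
  - rewrite Ex. destruct (classic (f x = x)) as [Fx|Fx]; [rewrite Fx; auto|].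
    destruct (classic (h (f x) = f x)) as [Hfx|Hfx]; [auto|].
    exfalso. apply (Hdisj (f x)); [apply Hf | apply Hh]; auto.
  - destruct (Hh x Ex) as [Vx Vhx].
    assert (f x = x) by (apply NNPP; intro Fx; exact (Hdisj x (proj1 (Hf x Fx)) Vx)).
    assert (f (h x) = h x)
      by (apply NNPP; intro Fx; exact (Hdisj (h x) (proj1 (Hf _ Fx)) Vhx)).
    congruence.
Qed.

Lemma derived_moves_within G d : PL_group G -> derived G d ->
  exists e, 0 < e <= 1/2 /\ moves_within d (fun x => e < x < 1 - e).
Proof.
  intros HG Hd.
  pose proof (proj1 HG d (derived_mem G d HG Hd)) as Pd.
  destruct (derived_germ G 0 d HG (or_introl eq_refl) Hd) as [e0 [He0 G0]].
  destruct (derived_germ G 1 d HG (or_intror eq_refl) Hd) as [e1 [He1 G1]].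
  pose proof (Rmin_l (Rmin e0 e1) (1/2)). pose proof (Rmin_r (Rmin e0 e1) (1/2)).
  pose proof (Rmin_l e0 e1). pose proof (Rmin_r e0 e1).
  set (e := Rmin (Rmin e0 e1) (1/2)) in *.
  assert (0 < e) by (repeat apply Rmin_pos; lra).
  assert (Fix : forall t, t <= e \/ 1 - e <= t -> d t = t).
  { intros t Ht.
    destruct (Rlt_le_dec t 0); [apply (proj1 Pd); lra|].
    destruct (Rlt_le_dec 1 t); [apply (proj1 Pd); lra|].
    destruct Ht; [rewrite G0 | rewrite G1]; lra. }
  exists e. split; [lra|]. intros x Hx.
  assert (Hxe : e < x < 1 - e).
  { split; apply Rnot_le_lt; intro; apply Hx, Fix; lra. }
  split; [exact Hxe|].
  pose proof (PL_homeo_lt d e x Pd). pose proof (PL_homeo_lt d x (1 - e) Pd).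
  rewrite (Fix e), (Fix (1 - e)) in * by lra. lra.
Qed.

Lemma derived_list_moves_within G s : PL_group G -> (forall a, In a s -> derived G a) ->
  exists e, 0 < e <= 1/2 /\ forall a, In a s -> moves_within a (fun x => e < x < 1 - e).
Proof.
  intros HG. induction s as [|y s IH]; intros Hs.
  - exists (1/2). split; [lra|]. intros a [].
  - destruct IH as [e [He He']]; [intros a Ha; apply Hs; right; auto|].
    destruct (derived_moves_within G y HG (Hs y (or_introl eq_refl))) as [e2 [He2 Hy]].
    pose proof (Rmin_l e e2). pose proof (Rmin_r e e2).
    exists (Rmin e e2). split; [split; [apply Rmin_pos|]; lra|].
    intros a [<-|Ha]; (eapply moves_within_weaken; [eauto|]); intros x Hx; lra.
Qed.

Lemma inf_exists (E : R -> Prop) m :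
  (exists x, E x) -> (forall x, E x -> m <= x) ->
  exists s, (forall x, E x -> s <= x) /\ forall w, s < w -> exists x, E x /\ x < w.
Proof.
  intros Hne Hlb.
  destruct (completeness (fun y => E (- y))) as [M [Hub Hleast]].
  - exists (- m). intros y Hy. specialize (Hlb _ Hy). lra.
  - destruct Hne as [x Hx]. exists (- x). rewrite Ropp_involutive. exact Hx.
  - exists (- M). split.
    + intros x Hx. assert (- x <= M) by (apply Hub; rewrite Ropp_involutive; auto). lra.
    + intros w Hw. apply NNPP; intro N.
      assert (M <= - w); [|lra].
      apply Hleast. intros y Hy. apply Rnot_lt_le. intro Hlt.
      apply N. exists (- y). split; [exact Hy|lra].
Qed.

(* The infimum s of an orbit satisfies s <= k s for every k in G: if k s < s,
   then k maps a point of the orbit slightly above s strictly below s. *)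
Lemma orbit_inf_le G t s k : PL_group G -> 0 <= t <= 1 -> 0 <= s ->
  (forall g, G g -> s <= g t) -> (forall w, s < w -> exists g, G g /\ g t < w) ->
  G k -> s <= k s.
Proof.
  intros HG Ht Hs Hlb Happrox Hk.
  pose proof HG as [HPL [Hid [Hcomp Hinv]]].
  assert (Hst : s <= t) by apply (Hlb idR Hid).
  apply Rnot_lt_le; intro Hlt.
  destruct (Hinv k Hk) as [h [Hh [E1 E2]]].
  pose proof (PL_homeo_maps01 k (HPL k Hk)) as Mk.
  pose proof (PL_homeo_maps01 h (HPL h Hh)) as Mh.
  assert (0 <= k s) by (apply Mk; lra).
  set (w := (k s + s) / 2).
  assert (Hw : s < h w)
    by (rewrite <- (E2 s) at 1; apply (PL_homeo_lt h); auto; unfold w; lra).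
  destruct (Happrox (h w) Hw) as [g [Hg Hgt]].
  pose proof (PL_homeo_maps01 g (HPL g Hg) t Ht).
  assert (0 <= h w <= 1) by (apply Mh; unfold w; lra).
  assert (k (g t) < w) by (rewrite <- (E1 w); apply (PL_homeo_lt k); auto; lra).
  assert (s <= k (g t)) by (apply (Hlb (fun x => k (g x))); auto).
  unfold w in *. lra.
Qed.

Lemma PLT_orbit_approaches_0 G t d : PLT G -> 0 < t < 1 -> 0 < d ->
  exists g, G g /\ g t < d.
Proof.
  intros [HG Hmove] Ht Hd.
  pose proof HG as [HPL [Hid [_ Hinv]]].
  destruct (inf_exists (fun y => exists g, G g /\ y = g t) 0) as [s [Hlb Happrox]].
  - exists t, idR. auto.
  - intros y [g [Hg ->]]. apply (PL_homeo_maps01 g (HPL g Hg)). lra.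
  - assert (Hlb' : forall g, G g -> s <= g t) by (intros g Hg; apply Hlb; eauto).
    assert (Happrox' : forall w, s < w -> exists g, G g /\ g t < w).
    { intros w Hw. destruct (Happrox w Hw) as [y [[g [Hg ->]] Hy]]. eauto. }
    apply NNPP; intro Hno.
    assert (Hds : d <= s).
    { apply Rnot_lt_le; intro Hsd. destruct (Happrox' d Hsd) as [g Hgd]. eauto. }
    assert (Hst : s <= t) by apply (Hlb' idR Hid).
    destruct (Hmove s ltac:(lra)) as [k [Hk Hks]].
    destruct (Hinv k Hk) as [h [Hh [_ E2]]].
    pose proof (orbit_inf_le G t s k HG ltac:(lra) ltac:(lra) Hlb' Happrox' Hk).
    pose proof (orbit_inf_le G t s h HG ltac:(lra) ltac:(lra) Hlb' Happrox' Hh).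
    assert (k s <= 1) by (apply (PL_homeo_maps01 k (HPL k Hk)); lra).
    assert (Hlt : s < k s) by lra.
    pose proof (PL_homeo_lt h s (k s) (HPL h Hh) ltac:(lra) Hlt ltac:(lra)).
    rewrite E2 in *. lra.
Qed.

Theorem lemma4p5 (G : (R -> R) -> Prop) (sA sB : list (R -> R)) :
  PLT G ->
  (forall a, In a sA -> derived G a) ->
  (forall b, In b sB -> derived G b) ->
  exists g gi, G g /\ is_inv g gi /\
    forall a b, gen sA a -> gen sB b ->
      forall x, g (a (gi (b x))) = b (g (a (gi x))).
Proof.
  intros HP HA HB. pose proof (proj1 HP) as HG.
  destruct (derived_list_moves_within G sA HG HA) as [eA [HeA MA]].
  destruct (derived_list_moves_within G sB HG HB) as [eB [HeB MB]].
  destruct (PLT_orbit_approaches_0 G (1 - eA) eB HP ltac:(lra) ltac:(lra)) as [g [Hg Hgt]].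
  destruct (proj2 (proj2 (proj2 HG)) g Hg) as [gi [_ Hgi]].
  exists g, gi. split; [exact Hg|]. split; [exact Hgi|].
  intros a b Ha Hb.
  apply (moves_within_commute (fun y => g (a (gi y))) b
           (fun y => eA < gi y < 1 - eA) (fun x => eB < x < 1 - eB)).
  - apply (moves_within_conj g gi a (fun x => eA < x < 1 - eA) Hgi). apply (gen_moves_within sA); auto.
  - apply (gen_moves_within sB); auto.
  - intros y Hy Hy'.
    assert (g (gi y) < g (1 - eA)) by (apply (PL_homeo_lt g); [apply HG|..]; auto; lra).
    rewrite (proj1 Hgi) in *. lra.
Qed.
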